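(* Let $n\ge1$ and $P\ge1$ be integers, $a_0\in[0,2]$ and $a_1\in[0,P-1]$, and define $$\mathcal{C}'_{2,3,P}=\{\boldsymbol{x}\in\Sigma_2^n:\ \mathrm{VT}^{(0)}(\boldsymbol{x})\equiv a_0\pmod 3,\ \mathrm{VT}^{(1)}(\boldsymbol{x})\equiv a_1\pmod P\}.$$ Then for any two distinct $\boldsymbol{x},\boldsymbol{y}\in\mathcal{C}'_{2,3,P}$, if the difference between the largest and the smallest index at which they differ is less than $P$, then $d_H(\boldsymbol{x},\boldsymbol{y})\ge3$. Moreover, there exists a choice of $a_0,a_1$ such that $r(\mathcal{C}'_{2,3,P})\le\log_2P+\log_23$.
   Context: $\Sigma_2=\{0,1\}$. For $\boldsymbol{x}\in\Sigma_2^n$, $x[i]$ is its $i$-th entry and $\mathrm{VT}^{(k)}(\boldsymbol{x})=\sum_{i=1}^n i^kx[i]$. $d_H$ is Hamming distance. Redundancy: $r(\mathcal{C})=n-\log_2|\mathcal{C}|$. *)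

From mathcomp Require Import all_boot.
From Stdlib Require Import Reals.

Set Implicit Arguments.
Unset Strict Implicit.
Unset Printing Implicit Defensive.

(* binary words of length n; position i : 'I_n is the paper's index i+1 *)
Notation word n := {ffun 'I_n -> bool}.

Definition VT (n k : nat) (x : word n) : nat :=
  \sum_(i < n) (i.+1) ^ k * (x i : nat).

Definition dH (n : nat) (x y : word n) : nat := #|[set i | x i != y i]|.

Definition codeC (n P a0 a1 : nat) : {set word n} :=
  [set x : word n | (VT 0 x %% 3 == a0) && (VT 1 x %% P == a1)].

Definition log2 (x : R) : R := (ln x / ln 2)%R.

Definition redundancy (n : nat) (C : {set word n}) : R :=
  (INR n - log2 (INR #|C|))%R.

From mathcomp Require Import all_boot.
From Stdlib Require Import Reals Lra.

Set Implicit Arguments.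
Unset Strict Implicit.
Unset Printing Implicit Defensive.

(* Flipping the bits of x on a set D changes VT^(k) by the signed sum of the
   weights i^k over D.  If |D| = 1, VT^(0) changes by 1; if |D| = 2, either
   VT^(0) changes by 2, or the two flips go in opposite directions and VT^(1)
   changes by the gap between the two positions, which is in (0, P).  Neither
   is possible modulo 3, resp. P, so two codewords differ in at least three
   positions.  For the redundancy, the 3P cosets of the syndrome map
   x |-> (VT^(0)(x) mod 3, VT^(1)(x) mod P) partition the 2^n words, so one of
   them has at least 2^n / (3P) elements. *)

Definition diff_set n (x y : word n) : {set 'I_n} := [set i | x i != y i].

Lemma diff_set_eq0 n (x y : word n) : (diff_set x y == set0) = (x == y).
Proof.
apply/eqP/eqP => [xy | ->]; last by apply/setP => i; rewrite !inE eqxx.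
apply/ffunP => i; apply/eqP/negPn/negP => xy_i.
by have := in_set0 i; rewrite -xy inE xy_i.
Qed.

Lemma weighted_sum_flip n (x y : word n) (f : 'I_n -> nat) :
  \sum_(i < n) f i * x i + \sum_(i in diff_set x y) f i * y i =
  \sum_(i < n) f i * y i + \sum_(i in diff_set x y) f i * x i.
Proof.
rewrite [\sum_(i < n) f i * x i](bigID (mem (diff_set x y))).
rewrite [\sum_(i < n) f i * y i](bigID (mem (diff_set x y))) /=.
rewrite addnAC [RHS]addnAC [in RHS](addnC (\sum_(i in _) _)).
congr (_ + _); apply: eq_bigr => i.
by rewrite inE negbK => /eqP ->.
Qed.

Lemma eq_mod_offsets m a b d e :
  a + d = b + e -> a = b %[mod m] -> d = e %[mod m].
Proof.
move=> ad_be ab; apply/eqP; rewrite -(eqn_modDl a) ad_be.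
by rewrite -modnDml -ab modnDml.
Qed.

Lemma eq_mod_close m a b : a = b %[mod m] -> a <= b -> b - a < m -> a = b.
Proof.
move=> /eqP ab le_ab; rewrite eq_sym eqn_mod_dvd // in ab.
have [/eqP | gap_pos] := posnP (b - a).
  by rewrite subn_eq0 => le_ba _; apply/eqP; rewrite eqn_leq le_ab.
by rewrite ltnNge (dvdn_leq gap_pos ab).
Qed.

Lemma VT_flip n k (x y : word n) :
  VT k x + \sum_(i in diff_set x y) i.+1 ^ k * y i =
  VT k y + \sum_(i in diff_set x y) i.+1 ^ k * x i.
Proof. exact: weighted_sum_flip. Qed.

Section FewFlips.

Variables (n P : nat) (x y : word n).
Hypothesis VT0_xy : VT 0 x = VT 0 y %[mod 3].

Lemma not_single_flip : #|diff_set x y| != 1.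
Proof.
apply/negP => /cards1P [i D_i].
have : i \in diff_set x y by rewrite D_i set11.
rewrite inE; apply/negP.
have := eq_mod_offsets (VT_flip 0 x y) VT0_xy.
rewrite D_i !big_set1 Nat.pow_0_r !mul1n.
by case: (x i); case: (y i) => // /eqP.
Qed.

Hypothesis VT1_xy : VT 1 x = VT 1 y %[mod P].
Hypothesis burst : forall i j : 'I_n, x i != y i -> x j != y j -> j - i < P.

Lemma not_double_flip : #|diff_set x y| != 2.
Proof.
apply/negP => /cards2P [i [j [neq_ij D_ij]]].
have : i \in diff_set x y by rewrite D_ij !inE eqxx.
have : j \in diff_set x y by rewrite D_ij !inE eqxx orbT.
rewrite !inE => flip_j flip_i.
have i_notin_j : i \notin [set j] by rewrite in_set1.
have offsets k m : VT k x = VT k y %[mod m] ->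
    i.+1 ^ k * y i + j.+1 ^ k * y j = i.+1 ^ k * x i + j.+1 ^ k * x j %[mod m].
  by move/(eq_mod_offsets (VT_flip k x y)); rewrite D_ij !big_setU1 // !big_set1.
have gap_mod : i = j %[mod P].
  suff : i.+1 == j.+1 %[mod P] by rewrite -[i.+1]addn1 -[j.+1]addn1 eqn_modDr => /eqP.
  move: (offsets 0 3 VT0_xy) (offsets 1 P VT1_xy) flip_i flip_j.
  rewrite Nat.pow_0_r !Nat.pow_1_r !mul1n.
  case: (x i); case: (y i); case: (x j); case: (y j) => //= _ /eqP;
    by rewrite !muln0 !muln1 addn0 add0n // eq_sym.
have [le_ij | lt_ji] := leqP i j.
  by move: neq_ij; rewrite -val_eqE /= (eq_mod_close gap_mod le_ij (burst flip_i flip_j)) eqxx.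
move: neq_ij; rewrite eq_sym -val_eqE /=.
by rewrite (eq_mod_close (esym gap_mod) (ltnW lt_ji) (burst flip_j flip_i)) eqxx.
Qed.

End FewFlips.

Lemma dH_codeC_ge3 n P a0 a1 (x y : word n) :
  x \in codeC n P a0 a1 -> y \in codeC n P a0 a1 -> x != y ->
  (forall i j : 'I_n, x i != y i -> x j != y j -> j - i < P) ->
  3 <= dH x y.
Proof.
rewrite !inE => /andP[/eqP x0 /eqP x1] /andP[/eqP y0 /eqP y1] neq_xy burst.
have VT0_xy : VT 0 x = VT 0 y %[mod 3] by rewrite x0 y0.
have VT1_xy : VT 1 x = VT 1 y %[mod P] by rewrite x1 y1.
have := not_double_flip VT0_xy VT1_xy burst; have := not_single_flip VT0_xy.
move: neq_xy; rewrite -diff_set_eq0 -cards_eq0 /dH -/(diff_set x y).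
by case: #|diff_set x y| => [|[|[|k]]].
Qed.

Lemma sum_card_fibers (T K : finType) (f : T -> K) :
  \sum_(k : K) #|[set t | f t == k]| = #|T|.
Proof.
rewrite -sum1_card (partition_big f predT) //; apply: eq_bigr => k _.
by rewrite -sum1_card; apply: eq_bigl => t; rewrite inE.
Qed.

Lemma exists_ge_mean (K : finType) (F : K -> nat) :
  0 < #|K| -> exists k, \sum_(i : K) F i <= #|K| * F k.
Proof.
case/(eq_bigmax F) => k max_k; exists k.
by rewrite -max_k -sum_nat_const; apply: leq_sum => i _; apply: leq_bigmax.
Qed.

Definition syndrome n P (P_gt0 : 0 < P) (x : word n) : 'I_3 * 'I_P :=
  (Ordinal (ltn_pmod (VT 0 x) (isT : 0 < 3)), Ordinal (ltn_pmod (VT 1 x) P_gt0)).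

Lemma codeC_syndrome n P (P_gt0 : 0 < P) (a : 'I_3 * 'I_P) :
  codeC n P a.1 a.2 = [set x | syndrome P_gt0 x == a].
Proof. by case: a => a0 a1; apply/setP => x; rewrite !inE. Qed.

Lemma exists_large_codeC n P : 0 < P ->
  exists a0 a1, a0 <= 2 /\ a1 <= P - 1 /\
    #|{: word n}| <= P * 3 * #|codeC n P a0 a1|.
Proof.
move=> P_gt0; have syndromes_gt0 : 0 < #|{: 'I_3 * 'I_P}|.
  by rewrite card_prod !card_ord muln_gt0 P_gt0.
have [[a0 a1] mean] :=
  exists_ge_mean (fun a : 'I_3 * 'I_P => #|codeC n P a.1 a.2|) syndromes_gt0.
exists a0, a1; split; first by rewrite -ltnS.
split; first by rewrite subn1 -ltnS prednK.
move: mean; under eq_bigr do rewrite codeC_syndrome.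
by rewrite sum_card_fibers card_prod !card_ord [3 * P]mulnC.
Qed.

(* With Reals imported last, [^] on nat is [Nat.pow] (as in [VT]), whereas
   [card_ffun] produces [expn]. *)
Lemma expn_pow m k : expn m k = m ^ k.
Proof. by elim: k => // k IHk; rewrite expnS IHk. Qed.

Lemma INR_gt0 k : 0 < k -> (0 < INR k)%R.
Proof. by move=> /ltP; apply: lt_0_INR. Qed.

Lemma ln2_gt0 : (0 < ln 2)%R.
Proof. by have := ln_lt_2; lra. Qed.

Lemma log2_mul x y : (0 < x)%R -> (0 < y)%R -> log2 (x * y) = (log2 x + log2 y)%R.
Proof. by move=> x_gt0 y_gt0; rewrite /log2 ln_mult //; field; have := ln2_gt0; lra. Qed.

Lemma log2_card_word n : log2 (INR #|{: word n}|) = INR n.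
Proof.
rewrite card_ffun card_bool card_ord expn_pow pow_INR (_ : INR 2 = 2%R) /=; last lra.
by rewrite /log2 ln_pow; [field; have := ln2_gt0; lra | lra].
Qed.

Lemma log2_le x y : (0 < x)%R -> (x <= y)%R -> (log2 x <= log2 y)%R.
Proof.
move=> x_gt0 [lt_xy | ->]; last by apply: Rle_refl.
apply: Rmult_le_compat_r; first by left; apply/Rinv_0_lt_compat/ln2_gt0.
by left; apply: ln_increasing.
Qed.

Lemma redundancy_le_log2 n (C : {set word n}) m :
  #|{: word n}| <= m * #|C| -> (redundancy C <= log2 (INR m))%R.
Proof.
move=> cover; have word_gt0 : 0 < #|{: word n}| by rewrite card_ffun expn_gt0 card_bool.
have := leq_trans word_gt0 cover; rewrite muln_gt0 => /andP[m_gt0 C_gt0].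
have cover_R : (INR #|{: word n}| <= INR m * INR #|C|)%R.
  by rewrite -mult_INR; apply/le_INR/leP.
have := log2_le (INR_gt0 word_gt0) cover_R.
rewrite log2_card_word (log2_mul (INR_gt0 m_gt0) (INR_gt0 C_gt0)) /redundancy; lra.
Qed.

Theorem theorem8 (n P : nat) (hn : 1 <= n) (hP : 1 <= P) :
  (forall a0 a1 : nat, a0 <= 2 -> a1 <= P - 1 ->
    forall x y : word n, x \in codeC n P a0 a1 -> y \in codeC n P a0 a1 ->
      x != y ->
      (* largest differing index minus smallest differing index < P *)
      (forall i j : 'I_n, x i != y i -> x j != y j -> j - i < P) ->
      3 <= dH x y)
  /\
  (exists a0 a1 : nat, a0 <= 2 /\ a1 <= P - 1 /\
     (redundancy (codeC n P a0 a1) <= log2 (INR P) + log2 (INR 3))%R).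
Proof.
split=> [a0 a1 _ _ x y | ]; first exact: dH_codeC_ge3.
have [a0 [a1 [a0_le2 [a1_le cover]]]] := exists_large_codeC n hP.
exists a0, a1; do 2!split => //.
rewrite -(log2_mul (INR_gt0 hP) (INR_gt0 (isT : 0 < 3))) -mult_INR.
exact: redundancy_le_log2.
Qed.
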